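(* For any sequence of groups $(G_n)_{n\in\mathbb N}$, the archipelago group $\mathcal A(G_n)$ is torsion-free.
   Context: For a sequence of groups $(G_n)_{n\in\mathbb N}$, an infinite word is a map $w:L\to\bigsqcup_n (G_n\setminus\{1\})$ from a countable linearly ordered set $L$ such that $w^{-1}(G_n)$ is finite for every $n$. Two infinite words are equivalent if for every $m$ their restrictions to the letters from $G_1,\dots,G_m$ represent the same element of $G_1*\cdots*G_m$. The topologist's product $\circledast_n G_n$ is the group of equivalence classes, with multiplication induced by concatenation and inversion by reversing the order and inverting each letter. The free product $*_n G_n$ is the subgroup of classes of finite words. The archipelago group is $\mathcal A(G_n):=\circledast_n G_n/\langle\langle *_n G_n\rangle\rangle$ (quotient by the normal closure). *)

From Stdlib Require Import List Relations Sorted PeanoNat Lia.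
Import ListNotations.
Set Implicit Arguments.

Record group := Group {
  gcar :> Type;
  gmul : gcar -> gcar -> gcar;
  ginv : gcar -> gcar;
  gone : gcar;
  gmulA : forall x y z, gmul x (gmul y z) = gmul (gmul x y) z;
  gmul1l : forall x, gmul gone x = x;
  gmulVl : forall x, gmul (ginv x) x = gone }.
Arguments gmul {_}. Arguments ginv {_}. Arguments gmulA {_}. Arguments gmul1l {_}. Arguments gmulVl {_}.

Lemma ginv_eq1 (H : group) (g : H) : ginv g = gone H -> g = gone H.
Proof. intro e. rewrite <- (gmul1l g). rewrite <- e at 1. apply gmulVl. Qed.

Section Archipelago.
Variable G : nat -> group.

Definition letter := {n : nat & gcar (G n)}.

(* ---- Free product of G_0,...,G_{m-1} : finite words modulo the standard
   relations (delete an identity letter, merge two adjacent letters of the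
   same factor).  [fp_eq m u v] : u and v represent the same element of
   G_0 * ... * G_{m-1}. *)
Inductive fp_step (m : nat) : list letter -> list letter -> Prop :=
| fp_del : forall u v n, n < m ->
    fp_step m (u ++ existT _ n (gone (G n)) :: v) (u ++ v)
| fp_merge : forall u v n (g h : G n),
    fp_step m (u ++ existT _ n g :: existT _ n h :: v)
              (u ++ existT _ n (gmul g h) :: v).

Definition fp_eq (m : nat) : relation (list letter) :=
  clos_refl_sym_trans _ (fp_step m).

(* ---- Infinite words: a countable linearly ordered set L and a map
   L -> disjoint union of the G_n \ {1}, with finite preimage of each G_n. *)
Record iword := IWord {
  wL : Type;
  wlt : wL -> wL -> Prop;
  wlt_irr : forall i, ~ wlt i i;
  wlt_trans : forall i j k, wlt i j -> wlt j k -> wlt i k;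
  wlt_total : forall i j, wlt i j \/ i = j \/ wlt j i;
  wcount : exists f : wL -> nat, forall i j, f i = f j -> i = j;
  wlet : wL -> letter;
  wnontriv : forall i, projT2 (wlet i) <> gone (G (projT1 (wlet i)));
  wfin : forall n, exists l : list wL, forall i, projT1 (wlet i) = n -> In i l }.

Arguments wlt_irr {_}. Arguments wlt_trans {_}. Arguments wlt_total {_}. Arguments wnontriv {_}.

Definition restr (w : iword) (m : nat) (l : list (wL w)) : Prop :=
  StronglySorted (@wlt w) l /\
  (forall i, In i l <-> projT1 (wlet w i) < m).

Definition word_eq (w1 w2 : iword) : Prop :=
  forall m l1 l2, restr w1 m l1 -> restr w2 m l2 ->
    fp_eq m (map (wlet w1) l1) (map (wlet w2) l2).

Definition is_finite_word (w : iword) : Prop :=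
  exists l : list (wL w), forall i, In i l.

Definition sumlt (A B : Type) (ra : A -> A -> Prop) (rb : B -> B -> Prop)
  (x y : A + B) : Prop :=
  match x, y with
  | inl a, inl a' => ra a a'
  | inl _, inr _ => True
  | inr _, inl _ => False
  | inr b, inr b' => rb b b'
  end.

Definition sumlet (w1 w2 : iword) (x : wL w1 + wL w2) : letter :=
  match x with inl a => wlet w1 a | inr b => wlet w2 b end.

Lemma concat_irr (w1 w2 : iword) :
  forall i, ~ sumlt (@wlt w1) (@wlt w2) i i.
Proof. intros [a|b]; simpl; apply wlt_irr. Qed.

Lemma concat_trans (w1 w2 : iword) : forall i j k,
  sumlt (@wlt w1) (@wlt w2) i j -> sumlt (@wlt w1) (@wlt w2) j k ->
  sumlt (@wlt w1) (@wlt w2) i k.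
Proof.
  intros [a|a] [b|b] [c|c]; simpl; try tauto; apply wlt_trans.
Qed.

Lemma concat_total (w1 w2 : iword) : forall i j,
  sumlt (@wlt w1) (@wlt w2) i j \/ i = j \/ sumlt (@wlt w1) (@wlt w2) j i.
Proof.
  intros [a|a] [b|b]; simpl; auto.
  - destruct (wlt_total a b) as [h|[h|h]]; subst; auto.
  - destruct (wlt_total a b) as [h|[h|h]]; subst; auto.
Qed.

Lemma concat_count (w1 w2 : iword) :
  exists f : wL w1 + wL w2 -> nat, forall i j, f i = f j -> i = j.
Proof.
  destruct (wcount w1) as [f1 h1]; destruct (wcount w2) as [f2 h2].
  exists (fun x => match x with inl a => 2 * f1 a | inr b => S (2 * f2 b) end).
  intros [a|a] [b|b] e.
  - f_equal; apply h1; lia.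
  - exfalso; lia.
  - exfalso; lia.
  - f_equal; apply h2; lia.
Qed.

Lemma concat_nontriv (w1 w2 : iword) : forall i,
  projT2 (sumlet w1 w2 i) <> gone (G (projT1 (sumlet w1 w2 i))).
Proof. intros [a|b]; simpl; apply wnontriv. Qed.

Lemma concat_fin (w1 w2 : iword) : forall n, exists l : list (wL w1 + wL w2),
  forall i, projT1 (sumlet w1 w2 i) = n -> In i l.
Proof.
  intro n. destruct (wfin w1 n) as [l1 h1]; destruct (wfin w2 n) as [l2 h2].
  exists (map inl l1 ++ map inr l2). intros [a|b] e; simpl in e;
  apply in_or_app; [left|right]; apply in_map; auto.
Qed.

Definition concat (w1 w2 : iword) : iword :=
  @IWord (wL w1 + wL w2) (sumlt (@wlt w1) (@wlt w2))
    (@concat_irr w1 w2) (@concat_trans w1 w2) (@concat_total w1 w2)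
    (concat_count w1 w2) (sumlet w1 w2) (@concat_nontriv w1 w2)
    (@concat_fin w1 w2).

Definition invlet (x : letter) : letter :=
  existT _ (projT1 x) (ginv (projT2 x)).

Lemma inverse_nontriv (w : iword) : forall i,
  projT2 (invlet (wlet w i)) <> gone (G (projT1 (invlet (wlet w i)))).
Proof. intros i e. apply (wnontriv i). apply ginv_eq1. exact e. Qed.

Lemma inverse_total (w : iword) : forall i j : wL w,
  @wlt w j i \/ i = j \/ @wlt w i j.
Proof. intros i j. destruct (wlt_total i j) as [h|[h|h]]; auto. Qed.

Definition inverse (w : iword) : iword :=
  @IWord (wL w) (fun i j => @wlt w j i) (@wlt_irr w)
    (fun i j k h1 h2 => wlt_trans _ _ _ h2 h1) (@inverse_total w)
    (wcount w) (fun i => invlet (wlet w i)) (@inverse_nontriv w)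
    (wfin w).

(* positive powers: [wpow w k] is the word w^(k+1) *)
Fixpoint wpow (w : iword) (k : nat) : iword :=
  match k with 0 => w | S k' => concat (wpow w k') w end.

(* ---- the normal closure of the free product inside the topologist's
   product (as a set of infinite words, closed under equivalence) *)
Inductive in_ncl : iword -> Prop :=
| ncl_fin : forall w, is_finite_word w -> in_ncl w
| ncl_mul : forall a b, in_ncl a -> in_ncl b -> in_ncl (concat a b)
| ncl_inv : forall a, in_ncl a -> in_ncl (inverse a)
| ncl_conj : forall a u, in_ncl a -> in_ncl (concat (concat u a) (inverse u))
| ncl_eq : forall a b, in_ncl a -> word_eq a b -> in_ncl b.

End Archipelago.

(* The m-th truncation of an infinite word lives in the free product
   G_0 * ... * G_{m-1}, where reduced words are normal forms.  Every element of the
   normal closure of the free product is "tail trivial": for some N, all its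
   truncations die when the factors G_0, ..., G_{N-1} are deleted; this holds for
   finite words and survives products, inverses, conjugation and equivalence.
   Conversely a tail-trivial word is, modulo equivalence, a product of conjugates of
   its finitely many letters from G_0, ..., G_{N-1}, so it lies in the normal closure.
   Now let w^(k+1) be in the normal closure.  After deleting G_0, ..., G_{N-1}, the
   truncations of w become torsion elements of free products, hence each is trivial
   or conjugate to a single letter.  Since the truncations are compatible, that letter
   has the same index n for all of them, so deleting the factors up to n as well
   makes w tail trivial. *)

From Stdlib Require Import List Relations Sorted PeanoNat Wf_nat Lia.
From Stdlib Require Import ClassicalEpsilon ProofIrrelevance Eqdep_dec.
Import ListNotations.
Set Implicit Arguments.
Unset Strict Implicit.

Section GroupLemmas.
Variable H : group.

Lemma gmulVr (g : H) : gmul g (ginv g) = gone H.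
Proof.
  rewrite <- (gmul1l (gmul g (ginv g))), <- (gmulVl (ginv g)) at 1.
  rewrite <- gmulA, (gmulA (ginv g)), gmulVl, gmul1l. apply gmulVl.
Qed.

Lemma gmul1r (g : H) : gmul g (gone H) = g.
Proof. rewrite <- (gmulVl g), gmulA, gmulVr. apply gmul1l. Qed.

End GroupLemmas.

(** * Normal forms in a free product *)

Section FreeProduct.
Variable G : nat -> group.
Notation L := (letter G).
Local Notation decide := excluded_middle_informative.

Definition cast n n' (e : n = n') (x : G n) : G n' := eq_rect n (fun k => gcar (G k)) x n' e.

Lemma cast_id n (e : n = n) x : cast e x = x.
Proof. unfold cast. rewrite <- (eq_rect_eq_dec Nat.eq_dec). reflexivity. Qed.

Definition trivial_letter (a : L) : Prop := projT2 a = gone (G (projT1 a)).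

Fixpoint reduced (r : list L) : Prop :=
  match r with
  | [] => True
  | a :: t => ~ trivial_letter a /\
      match t with [] => True | b :: _ => projT1 a <> projT1 b end /\ reduced t
  end.

(* Van der Waerden's trick: letters act on reduced words by left multiplication
   followed by reduction; the action respects the defining relations of the free
   product, which yields normal forms without any confluence argument. *)
Definition act (a : L) (r : list L) : list L :=
  match r with
  | [] => if decide (trivial_letter a) then [] else [a]
  | b :: t =>
    match Nat.eq_dec (projT1 a) (projT1 b) with
    | left e =>
        let g := gmul (cast e (projT2 a)) (projT2 b) in
        if decide (g = gone _) then t else existT _ (projT1 b) g :: t
    | right _ => if decide (trivial_letter a) then r else a :: r
    end
  end.

Definition act_word (u r : list L) : list L := fold_right act r u.

Definition reduce (u : list L) : list L := act_word u [].

Lemma act_reduced a r : reduced r -> reduced (act a r).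
Proof.
  destruct r as [|b t]; simpl.
  - intros _. destruct (decide (trivial_letter a)); simpl; tauto.
  - intros [h1 [h2 h3]]. destruct a as [n g], b as [n' h]; simpl in *.
    destruct (Nat.eq_dec n n') as [e|e].
    + subst n'. rewrite cast_id. destruct (decide _); simpl; auto.
    + destruct (decide _); simpl; auto.
Qed.

Lemma act_one n r : reduced r -> act (existT _ n (gone (G n))) r = r.
Proof.
  destruct r as [|[n' x] t]; simpl.
  - intros _. destruct (decide _) as [e|e]; auto. exfalso; apply e; reflexivity.
  - intros [h1 _]. destruct (Nat.eq_dec n n') as [e|e].
    + subst. rewrite cast_id, gmul1l. destruct (decide _); [contradiction|auto].
    + destruct (decide _) as [e1|e1]; auto. exfalso; apply e1; reflexivity.
Qed.

Lemma act_merge_cancel n (g h x : G n) t : reduced (existT _ n x :: t) ->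
  gmul h x = gone _ ->
  act (existT _ n g) t = act (existT _ n (gmul g h)) (existT _ n x :: t).
Proof.
  intros [_ [hnt _]] e1. simpl. destruct (Nat.eq_dec n n) as [e|]; [|congruence].
  rewrite cast_id, <- gmulA, e1, gmul1r.
  destruct t as [|[n2 y] t']; simpl.
  - reflexivity.
  - destruct (Nat.eq_dec n n2); [simpl in hnt; congruence|]. reflexivity.
Qed.

Lemma act_merge n (g h : G n) r : reduced r ->
  act (existT _ n g) (act (existT _ n h) r) = act (existT _ n (gmul g h)) r.
Proof.
  intro hr. destruct r as [|[n' x] t]; simpl.
  - unfold trivial_letter; simpl. destruct (decide (h = gone _)) as [->|e].
    + rewrite gmul1r. reflexivity.
    + simpl. destruct (Nat.eq_dec n n) as [e'|]; [|congruence]. rewrite cast_id. reflexivity.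
  - destruct (Nat.eq_dec n n') as [e|e].
    + subst n'. rewrite !cast_id. destruct (decide (gmul h x = gone _)) as [e1|e1].
      * rewrite (act_merge_cancel g hr e1). simpl.
        destruct (Nat.eq_dec n n) as [e'|]; [|congruence]. rewrite cast_id. reflexivity.
      * simpl. destruct (Nat.eq_dec n n) as [e'|]; [|congruence].
        rewrite cast_id, !gmulA. reflexivity.
    + unfold trivial_letter; simpl. destruct (decide (h = gone _)) as [->|e1].
      * rewrite gmul1r. simpl. destruct (Nat.eq_dec n n'); [congruence|]. reflexivity.
      * simpl. destruct (Nat.eq_dec n n) as [e'|]; [|congruence]. rewrite cast_id.
        destruct (Nat.eq_dec n n'); [congruence|]. destruct (decide _); reflexivity.
Qed.

Lemma act_word_app u v r : act_word (u ++ v) r = act_word u (act_word v r).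
Proof. apply fold_right_app. Qed.

Lemma act_word_reduced u r : reduced r -> reduced (act_word u r).
Proof. induction u; simpl; auto using act_reduced. Qed.

Lemma reduce_reduced u : reduced (reduce u).
Proof. apply act_word_reduced; exact I. Qed.

Lemma reduce_app u v : reduce (u ++ v) = act_word u (reduce v).
Proof. apply act_word_app. Qed.

Lemma act_word_step m u v r : reduced r -> fp_step m u v -> act_word u r = act_word v r.
Proof.
  intros hr [u0 v0 n hn | u0 v0 n g h]; rewrite !act_word_app; f_equal; simpl.
  - apply act_one, act_word_reduced, hr.
  - apply act_merge, act_word_reduced, hr.
Qed.

Lemma act_word_fp_eq m u v r : reduced r -> fp_eq m u v -> act_word u r = act_word v r.
Proof.
  intro hr. induction 1 as [u v h| |u v _ IH|u v w _ IH1 _ IH2].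
  - exact (act_word_step hr h).
  - reflexivity.
  - symmetry; exact IH.
  - rewrite IH1; exact IH2.
Qed.

Lemma reduce_fp_eq m u v : fp_eq m u v -> reduce u = reduce v.
Proof. exact (act_word_fp_eq (r := []) I). Qed.

Lemma reduce_id r : reduced r -> reduce r = r.
Proof.
  induction r as [|a t IH]; simpl; auto. intros [h1 [h2 h3]].
  change (act a (reduce t) = a :: t). rewrite IH by auto.
  destruct t as [|b t']; simpl.
  - destruct (decide (trivial_letter a)); tauto.
  - destruct (Nat.eq_dec (projT1 a) (projT1 b)); [contradiction|].
    destruct (decide (trivial_letter a)); tauto.
Qed.

Lemma reduce_idem u : reduce (reduce u) = reduce u.
Proof. apply reduce_id, reduce_reduced. Qed.

Definition bounded m (u : list L) := Forall (fun a => projT1 a < m) u.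

Lemma bounded_exists (u : list L) : exists m, bounded m u.
Proof.
  induction u as [|a u [m hm]]; [exists 0; constructor|].
  exists (S (max m (projT1 a))). constructor; [lia|].
  eapply Forall_impl; [|exact hm]. simpl; intros; lia.
Qed.

Lemma fp_eq_app_l m (p x y : list L) : fp_eq m x y -> fp_eq m (p ++ x) (p ++ y).
Proof.
  induction 1 as [x y h| | |]; [|apply rst_refl|apply rst_sym; auto|eapply rst_trans; eauto].
  apply rst_step. destruct h as [u0 v0 n hn|u0 v0 n g h]; rewrite !app_assoc.
  - apply fp_del; exact hn.
  - apply fp_merge.
Qed.

Lemma fp_eq_act m a r : reduced r -> projT1 a < m -> fp_eq m (a :: r) (act a r).
Proof.
  intros hr ha. destruct r as [|b t]; simpl.
  - destruct (decide (trivial_letter a)) as [e|e]; [|apply rst_refl].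
    destruct a as [n g]; unfold trivial_letter in e; simpl in *; subst g.
    apply rst_step, (@fp_del G m [] [] n ha).
  - destruct a as [n g], b as [n' h]; simpl in *.
    destruct (Nat.eq_dec n n') as [e|e].
    + subst n'. rewrite cast_id.
      assert (hmerge : fp_eq m (existT _ n g :: existT _ n h :: t)
                               (existT _ n (gmul g h) :: t))
        by apply rst_step, (@fp_merge G m [] t n g h).
      destruct (decide _) as [e|e]; auto.
      eapply rst_trans; [exact hmerge|]. rewrite e.
      apply rst_step, (@fp_del G m [] t n ha).
    + destruct (decide _) as [e1|e1]; [|apply rst_refl].
      unfold trivial_letter in e1; simpl in e1; subst g.
      apply rst_step, (@fp_del G m [] (existT _ n' h :: t) n ha).
Qed.

Lemma fp_eq_reduce m u : bounded m u -> fp_eq m u (reduce u).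
Proof.
  induction 1 as [|a u ha hu IH]; [apply rst_refl|].
  eapply rst_trans; [exact (fp_eq_app_l [a] IH)|].
  apply fp_eq_act; auto using reduce_reduced.
Qed.

Lemma fp_eq_of_reduce m u v : bounded m u -> bounded m v ->
  reduce u = reduce v -> fp_eq m u v.
Proof.
  intros hu hv e. eapply rst_trans; [apply fp_eq_reduce, hu|].
  rewrite e. apply rst_sym, fp_eq_reduce, hv.
Qed.

Lemma act_word_reduce u r : reduced r -> act_word u r = act_word (reduce u) r.
Proof.
  intro hr. destruct (bounded_exists u) as [m hm].
  exact (act_word_fp_eq hr (fp_eq_reduce hm)).
Qed.

Lemma reduce_app_reduce u v : reduce (u ++ v) = reduce (reduce u ++ reduce v).
Proof.
  rewrite !reduce_app, (reduce_id (reduce_reduced v)).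
  apply act_word_reduce, reduce_reduced.
Qed.

Lemma reduce_congr u u' v v' :
  reduce u = reduce u' -> reduce v = reduce v' -> reduce (u ++ v) = reduce (u' ++ v').
Proof. intros e1 e2. rewrite reduce_app_reduce, e1, e2, <- reduce_app_reduce. reflexivity. Qed.

Lemma reduce_nil_l u v : reduce u = [] -> reduce (u ++ v) = reduce v.
Proof. intro e. rewrite reduce_app_reduce, e. apply reduce_idem. Qed.

Lemma reduce_nil_r u v : reduce v = [] -> reduce (u ++ v) = reduce u.
Proof. intro e. rewrite reduce_app_reduce, e, app_nil_r. apply reduce_idem. Qed.

Definition inv (u : list L) : list L := rev (map (@invlet G) u).

Lemma inv_cons a u : inv (a :: u) = inv u ++ [invlet a].
Proof. reflexivity. Qed.

Lemma act_invlet_l a r : reduced r -> act (invlet a) (act a r) = r.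
Proof. intro hr. destruct a as [n g]. unfold invlet; simpl. rewrite act_merge, gmulVl, act_one; auto. Qed.

Lemma act_invlet_r a r : reduced r -> act a (act (invlet a) r) = r.
Proof. intro hr. destruct a as [n g]. unfold invlet; simpl. rewrite act_merge, gmulVr, act_one; auto. Qed.

Lemma act_word_inv_l u r : reduced r -> act_word (inv u) (act_word u r) = r.
Proof.
  induction u as [|a u IH]; intro hr; simpl; auto.
  rewrite inv_cons, act_word_app. simpl.
  rewrite act_invlet_l by (apply act_word_reduced; auto). auto.
Qed.

Lemma act_word_inv_r u r : reduced r -> act_word u (act_word (inv u) r) = r.
Proof.
  revert r; induction u as [|a u IH]; intros r hr; [reflexivity|].
  rewrite inv_cons, act_word_app. simpl. rewrite IH by (apply act_reduced; auto).
  apply act_invlet_r; auto.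
Qed.

Lemma reduce_mulV u : reduce (u ++ inv u) = [].
Proof. rewrite reduce_app. exact (act_word_inv_r (r := []) u I). Qed.

Lemma reduce_mulVl u : reduce (inv u ++ u) = [].
Proof. rewrite reduce_app. exact (act_word_inv_l (r := []) u I). Qed.

Lemma reduce_cancel u c v : reduce (u ++ inv c ++ c ++ v) = reduce (u ++ v).
Proof.
  rewrite !reduce_app. f_equal. apply act_word_inv_l, reduce_reduced.
Qed.

Lemma reduce_inv_nil u : reduce u = [] -> reduce (inv u) = [].
Proof. intro e. rewrite <- (reduce_nil_r (inv u) e). apply reduce_mulVl. Qed.

Lemma reduce_conj_nil c x : reduce x = [] -> reduce (c ++ x ++ inv c) = [].
Proof. intro e. rewrite reduce_app, (reduce_nil_l (inv c) e), <- reduce_app. apply reduce_mulV. Qed.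

Lemma reduce_conj_nil_inv c x : reduce (c ++ x ++ inv c) = [] -> reduce x = [].
Proof.
  intro e.
  assert (hx : reduce (inv c ++ (c ++ x ++ inv c) ++ c) = reduce x).
  { pose proof (reduce_cancel [] c (x ++ inv c ++ c ++ [])) as h1.
    pose proof (reduce_cancel x c []) as h2.
    rewrite !app_nil_r in *. simpl in h1. rewrite <- !app_assoc, h1, h2. reflexivity. }
  rewrite <- hx, (reduce_congr (u := inv c) eq_refl (reduce_nil_l c e)). apply reduce_mulVl.
Qed.

End FreeProduct.

(** * Projections onto sets of factors, and torsion in free products *)

Section Projection.
Variable G : nat -> group.
Notation L := (letter G).

Definition project (p : nat -> bool) (u : list L) : list L :=
  filter (fun a => p (projT1 a)) u.

Lemma project_app p (u v : list L) : project p (u ++ v) = project p u ++ project p v.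
Proof. apply filter_app. Qed.

Lemma project_cons p (a : L) u :
  project p (a :: u) = (if p (projT1 a) then [a] else []) ++ project p u.
Proof. unfold project; simpl. destruct (p (projT1 a)); reflexivity. Qed.

Lemma project_inv p (u : list L) : project p (inv u) = inv (project p u).
Proof.
  induction u as [|a u IH]; [reflexivity|].
  rewrite inv_cons, project_app, IH, project_cons. unfold project at 2; simpl.
  destruct (p (projT1 a)); simpl; rewrite ?inv_cons, ?app_nil_r; reflexivity.
Qed.

Lemma project_project p q (u : list L) :
  project p (project q u) = project (fun n => andb (q n) (p n)) u.
Proof.
  induction u as [|a u IH]; [reflexivity|]. rewrite !project_cons.
  destruct (q (projT1 a)); simpl; [rewrite IH; destruct (p (projT1 a))|]; auto.
Qed.

Lemma project_ext p q (u : list L) : (forall n, p n = q n) -> project p u = project q u.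
Proof. intro h. apply filter_ext. intro; apply h. Qed.

Lemma project_comm p q (u : list L) : project p (project q u) = project q (project p u).
Proof. rewrite !project_project. apply project_ext. intro n. apply Bool.andb_comm. Qed.

Lemma project_leb_leb N N' (u : list L) :
  project (Nat.leb N') (project (Nat.leb N) u) = project (Nat.leb (max N N')) u.
Proof.
  rewrite project_project. apply project_ext. intro n.
  destruct (Nat.leb_spec N n), (Nat.leb_spec N' n), (Nat.leb_spec (max N N') n); simpl; lia.
Qed.

Lemma project_id p (u : list L) : (forall a, In a u -> p (projT1 a) = true) -> project p u = u.
Proof.
  induction u as [|a u IH]; intro h; [reflexivity|].
  rewrite project_cons, (h a), IH; simpl; auto. intros; apply h; simpl; auto.
Qed.

Lemma project_nil p (u : list L) : (forall a, In a u -> p (projT1 a) = false) -> project p u = [].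
Proof.
  induction u as [|a u IH]; intro h; [reflexivity|].
  rewrite project_cons, (h a), IH; simpl; auto. intros; apply h; simpl; auto.
Qed.

Lemma project_conj p (d : list L) b : project p (d ++ b :: inv d) =
  project p d ++ (if p (projT1 b) then [b] else []) ++ inv (project p d).
Proof. rewrite project_app, project_cons, project_inv. reflexivity. Qed.

Lemma project_fp_eq m p (u v : list L) : fp_eq m u v -> fp_eq m (project p u) (project p v).
Proof.
  induction 1 as [u v h| | |]; [|apply rst_refl|apply rst_sym; auto|eapply rst_trans; eauto].
  destruct h as [u0 v0 n hn|u0 v0 n g h]; rewrite !project_app, !project_cons; simpl;
    destruct (p n); simpl; try apply rst_refl; apply rst_step.
  - apply fp_del; exact hn.
  - apply fp_merge.
Qed.

Lemma project_reduce p (u v : list L) :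
  reduce u = reduce v -> reduce (project p u) = reduce (project p v).
Proof.
  intro e. destruct (bounded_exists (u ++ v)) as [m hm]. apply Forall_app in hm as [hu hv].
  exact (reduce_fp_eq (project_fp_eq p (fp_eq_of_reduce hu hv e))).
Qed.

Lemma project_reduce_nil p (u : list L) : reduce u = [] -> reduce (project p u) = [].
Proof. exact (project_reduce p (v := [])). Qed.

(* [pow u k] has [k + 1] factors, like [wpow w k]. *)

Fixpoint pow (u : list L) k := match k with 0 => u | S k => pow u k ++ u end.

Lemma project_pow p (u : list L) k : project p (pow u k) = pow (project p u) k.
Proof. induction k as [|k IH]; simpl; [|rewrite project_app, IH]; reflexivity. Qed.

Lemma reduce_pow_congr (u v : list L) k : reduce u = reduce v -> reduce (pow u k) = reduce (pow v k).
Proof. intro e. induction k; simpl; auto using reduce_congr. Qed.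

Lemma reduce_pow_conj (c y : list L) k :
  reduce (pow (c ++ y ++ inv c) k) = reduce (c ++ pow y k ++ inv c).
Proof.
  induction k as [|k IH]; [reflexivity|]. simpl.
  rewrite (reduce_congr (v := c ++ y ++ inv c) IH eq_refl).
  replace ((c ++ pow y k ++ inv c) ++ c ++ y ++ inv c)
    with ((c ++ pow y k) ++ inv c ++ c ++ (y ++ inv c)) by (rewrite <- !app_assoc; reflexivity).
  rewrite reduce_cancel, <- !app_assoc. reflexivity.
Qed.

End Projection.

Section Torsion.
Variable G : nat -> group.
Notation L := (letter G).
Local Notation decide := excluded_middle_informative.

Lemma length_act (a : L) r : length (act a r) <= S (length r).
Proof.
  destruct r as [|b t]; simpl.
  - destruct (decide _); simpl; lia.
  - destruct (Nat.eq_dec _ _); destruct (decide _); simpl; lia.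
Qed.

Lemma length_act_word (u r : list L) : length (act_word u r) <= length u + length r.
Proof. induction u as [|a u IH]; simpl; auto. pose proof (length_act a (act_word u r)). lia. Qed.

Definition cyclically_reduced (y : list L) : Prop :=
  match y with
  | [] | [_] => True
  | a :: _ => exists y' z, y = y' ++ [z] /\ projT1 a <> projT1 z
  end.

Lemma reduce_single (a : L) : reduce [a] = [] -> trivial_letter a.
Proof. unfold reduce; simpl. destruct (decide (trivial_letter a)); [auto|discriminate]. Qed.

Lemma reduce_rotate (a : L) s : reduce (a :: s) = reduce ([a] ++ reduce (s ++ [a]) ++ [invlet a]).
Proof.
  rewrite (reduce_congr (u := [a]) eq_refl (reduce_congr (reduce_idem (s ++ [a])) eq_refl)).
  rewrite <- (reduce_nil_r (a :: s) (reduce_mulV [a])). simpl. rewrite <- app_assoc. reflexivity.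
Qed.

(* Rotating the first letter [a] to the end merges it with the last letter [z]. *)
Lemma length_reduce_rotate s (z a : L) : ~ trivial_letter a -> projT1 z = projT1 a ->
  length (reduce (s ++ [z; a])) <= S (length s).
Proof.
  intros ha e. rewrite reduce_app.
  enough (length (reduce [z; a]) <= 1) by (pose proof (length_act_word s (reduce [z; a])); lia).
  unfold reduce; simpl. destruct (decide (trivial_letter a)); [contradiction|]. simpl.
  destruct (Nat.eq_dec (projT1 z) (projT1 a)); [|contradiction]. destruct (decide _); simpl; lia.
Qed.

Lemma cyclic_reduction (r : list L) : reduced r ->
  exists c y, reduced y /\ cyclically_reduced y /\ reduce r = reduce (c ++ y ++ inv c).
Proof.
  remember (length r) as n eqn:hn. revert r hn.
  induction n as [n IH] using lt_wf_ind. intros r hn hr.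
  destruct r as [|a [|b t]].
  - exists [], []. simpl; auto.
  - exists [], [a]. simpl; auto.
  - destruct (@exists_last _ (b :: t)) as [s [z E]]; [discriminate|].
    destruct (Nat.eq_dec (projT1 a) (projT1 z)) as [ez|ez].
    2: { exists [], (a :: b :: t). split; [exact hr|]. split.
         - exists (a :: s), z. rewrite E. auto.
         - simpl. rewrite app_nil_r. reflexivity. }
    assert (hlen : length (reduce (s ++ [z; a])) < n).
    { assert (length (a :: b :: t) = length s + 2) by (rewrite E; simpl; rewrite length_app; simpl; lia).
      pose proof (length_reduce_rotate s (proj1 hr) (eq_sym ez)). lia. }
    destruct (IH _ hlen _ eq_refl (reduce_reduced _)) as [c [y [hy1 [hy2 hy3]]]].
    exists (a :: c), y. split; [exact hy1|]. split; [exact hy2|].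
    rewrite E, reduce_rotate, <- app_assoc. change ([z] ++ [a]) with [z; a].
    rewrite (reduce_congr (u := [a]) eq_refl (reduce_congr (v := [invlet a]) hy3 eq_refl)).
    rewrite inv_cons, <- !app_assoc. reflexivity.
Qed.

Lemma reduced_app (u v : list L) z a : reduced (u ++ [z]) -> reduced (a :: v) ->
  projT1 z <> projT1 a -> reduced ((u ++ [z]) ++ a :: v).
Proof.
  intros h1 h2 h3. induction u as [|b u IH]; simpl in *; [tauto|].
  destruct h1 as [hb [hbn hr]]. split; [exact hb|]. split; [|auto].
  destruct u; simpl in *; auto.
Qed.

Lemma reduced_pow (y : list L) k : reduced y -> cyclically_reduced y -> 2 <= length y ->
  reduced (pow y k).
Proof.
  intros hr hc hl. destruct y as [|a [|b t]]; simpl in hl; try lia.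
  destruct hc as [y' [z [E hz]]].
  induction k as [|k IH]; [exact hr|]. simpl.
  assert (hlast : exists P, pow (a :: b :: t) k = P ++ [z]).
  { clear IH. induction k as [|k [P hP]]; [exists y'; exact E|].
    exists (pow (a :: b :: t) k ++ y'). simpl. rewrite E at 2. apply app_assoc. }
  destruct hlast as [P hP]. rewrite hP in IH |- *. apply reduced_app; auto.
Qed.

Lemma free_product_torsion (x : list L) k : reduce (pow x k) = [] ->
  reduce x = [] \/ exists c a, ~ trivial_letter a /\ reduce x = reduce (c ++ a :: inv c).
Proof.
  intro e. destruct (cyclic_reduction (reduce_reduced x)) as [c [y [hy1 [hy2 hy3]]]].
  rewrite reduce_idem in hy3.
  assert (ey : reduce (pow y k) = []).
  { apply (reduce_conj_nil_inv (c := c)). rewrite <- reduce_pow_conj, <- (reduce_pow_congr k hy3). exact e. }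
  destruct y as [|a [|b t]].
  - left. rewrite hy3. apply reduce_mulV.
  - right. exists c, a. split; [exact (proj1 hy1)|exact hy3].
  - exfalso. rewrite reduce_id in ey by (apply reduced_pow; simpl; auto; lia).
    destruct k; simpl in ey; [discriminate|]. destruct (app_eq_nil _ _ ey); discriminate.
Qed.

Lemma conj_letter_index (c d : list L) a b : ~ trivial_letter a ->
  reduce (c ++ a :: inv c) = reduce (d ++ b :: inv d) -> projT1 b = projT1 a.
Proof.
  intros ha e. destruct (Nat.eq_dec (projT1 b) (projT1 a)) as [eab|nab]; [exact eab|exfalso].
  apply (project_reduce (fun n => Nat.eqb n (projT1 a))) in e.
  rewrite !project_conj, Nat.eqb_refl in e.
  replace (projT1 b =? projT1 a) with false in e by (symmetry; apply Nat.eqb_neq, nab).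
  simpl in e. rewrite reduce_mulV in e.
  exact (ha (reduce_single (reduce_conj_nil_inv (x := [a]) e))).
Qed.

Lemma project_conj_index p (u c d : list L) a b : ~ trivial_letter a ->
  reduce (project p u) = reduce (c ++ a :: inv c) -> reduce u = reduce (d ++ b :: inv d) ->
  projT1 b = projT1 a.
Proof.
  intros ha hpu hu. apply (project_reduce p) in hu. rewrite project_conj, hpu in hu.
  destruct (p (projT1 b)); [exact (conj_letter_index ha hu)|].
  simpl in hu. rewrite reduce_mulV in hu.
  destruct (ha (reduce_single (reduce_conj_nil_inv (x := [a]) hu))).
Qed.

End Torsion.

(* [X m] describes the projections onto the first [m] factors of one (infinite)
   element whose [k+1]-st power is trivial.  If some projection is nontrivial, it is
   conjugate to a letter of index [n], and then so are all the longer projections;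
   hence deleting the factors up to [n] kills all of them. *)
Lemma torsion_family_tail_trivial (G : nat -> group) k (X : nat -> list (letter G) -> Prop) :
  (forall m, exists u, X m u) ->
  (forall m u, X m u -> reduce (pow u k) = []) ->
  (forall m m' u u', m <= m' -> X m u -> X m' u' -> u = project (fun n => n <? m) u') ->
  exists N, forall m u, X m u -> reduce (project (Nat.leb N) u) = [].
Proof.
  intros hex hpow hcoh.
  destruct (classic (forall m u, X m u -> reduce u = [])) as [hall|hn].
  { exists 0. intros m u hx. rewrite project_id; [exact (hall m u hx)|reflexivity]. }
  apply not_all_ex_not in hn as [m0 hn]. apply not_all_ex_not in hn as [u0 hn].
  apply imply_to_and in hn as [hx0 hu0].
  destruct (free_product_torsion (hpow _ _ hx0)) as [|[c [a [ha hca]]]]; [contradiction|].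
  exists (S (projT1 a)). intros m u hx.
  destruct (hex (max m m0)) as [u' hx'].
  assert (e0 : u0 = project (fun n => n <? m0) u') by (apply (hcoh m0 (max m m0)); auto; lia).
  assert (e : u = project (fun n => n <? m) u') by (apply (hcoh m (max m m0)); auto; lia).
  destruct (free_product_torsion (hpow _ _ hx')) as [h'|[d [b [hb hdb]]]].
  { destruct hu0. rewrite e0. apply project_reduce_nil, h'. }
  assert (eab : projT1 b = projT1 a) by (rewrite e0 in hca; exact (project_conj_index ha hca hdb)).
  rewrite e, project_project, (project_reduce _ hdb), project_conj.
  replace (andb (projT1 b <? m) (S (projT1 a) <=? projT1 b)) with false
    by (symmetry; apply Bool.andb_false_intro2, Nat.leb_gt; lia).
  apply reduce_mulV.
Qed.

(** * Truncations of infinite words *)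

Section StronglySortedLemmas.
Variables (T : Type) (lt : T -> T -> Prop).

Lemma StronglySorted_app (l1 l2 : list T) : StronglySorted lt l1 -> StronglySorted lt l2 ->
  (forall x y, In x l1 -> In y l2 -> lt x y) -> StronglySorted lt (l1 ++ l2).
Proof.
  induction l1 as [|a l1 IH]; simpl; auto. intros h1 h2 h3. inversion h1; subst.
  constructor; auto. apply Forall_app; split; auto.
  apply Forall_forall. intros y hy. apply h3; auto.
Qed.

Lemma StronglySorted_filter (f : T -> bool) (l : list T) :
  StronglySorted lt l -> StronglySorted lt (filter f l).
Proof.
  induction 1 as [|a l _ IH hf]; simpl; [constructor|]. destruct (f a); auto. constructor; auto.
  apply Forall_forall. intros x hx. apply filter_In in hx as [hx _].
  rewrite Forall_forall in hf. auto.
Qed.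

Lemma StronglySorted_map U (f : U -> T) (l : list U) :
  StronglySorted (fun x y => lt (f x) (f y)) l <-> StronglySorted lt (map f l).
Proof.
  split.
  - induction 1; simpl; constructor; auto. rewrite Forall_map. auto.
  - induction l as [|a l IH]; simpl; intro h; [constructor|]. inversion h; subst.
    constructor; auto. rewrite Forall_map in *. auto.
Qed.

Hypothesis lt_irrefl : forall i, ~ lt i i.
Hypothesis lt_trans : forall i j k, lt i j -> lt j k -> lt i k.
Hypothesis lt_total : forall i j, lt i j \/ i = j \/ lt j i.

Lemma StronglySorted_unique (l1 l2 : list T) : StronglySorted lt l1 -> StronglySorted lt l2 ->
  (forall i, In i l1 <-> In i l2) -> l1 = l2.
Proof.
  revert l2; induction l1 as [|a l1 IH]; intros l2 h1 h2 hi.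
  - destruct l2 as [|b l2]; auto. exfalso. apply (proj2 (hi b)). left; auto.
  - destruct l2 as [|b l2]; [exfalso; apply (proj1 (hi a)); left; auto|].
    apply StronglySorted_inv in h1 as [s1 f1], h2 as [s2 f2].
    rewrite Forall_forall in f1, f2.
    assert (eab : a = b).
    { destruct (proj1 (hi a) (or_introl eq_refl)) as [e|ha]; auto.
      destruct (proj2 (hi b) (or_introl eq_refl)) as [e|hb]; auto.
      exfalso. apply (lt_irrefl (lt_trans (f1 b hb) (f2 a ha))). }
    subst b. f_equal. apply IH; auto. intro i. split; intro hx.
    + destruct (proj1 (hi i) (or_intror hx)) as [<-|]; auto. destruct (lt_irrefl (f1 a hx)).
    + destruct (proj2 (hi i) (or_intror hx)) as [<-|]; auto. destruct (lt_irrefl (f2 a hx)).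
Qed.

Lemma StronglySorted_insert (a : T) l : StronglySorted lt l -> ~ In a l ->
  exists l', StronglySorted lt l' /\ forall i, In i l' <-> i = a \/ In i l.
Proof.
  induction l as [|b l IH]; intros h hn.
  - exists [a]. split; [repeat constructor|]. simpl. intuition congruence.
  - apply StronglySorted_inv in h as [s f]. rewrite Forall_forall in f.
    destruct (lt_total a b) as [hab|[e|hba]].
    + exists (a :: b :: l). split; [|simpl; intuition congruence].
      constructor; [constructor; [exact s|apply Forall_forall; exact f]|].
      constructor; [exact hab|]. apply Forall_forall. intros x hx. apply (lt_trans hab (f x hx)).
    + destruct hn. left; auto.
    + destruct IH as [l' [h1 h2]]; auto; [intro; apply hn; right; auto|].
      exists (b :: l'). split.
      * constructor; auto. apply Forall_forall. intros x hx. apply h2 in hx as [->|hx]; auto.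
      * intro i. simpl. rewrite h2. intuition congruence.
Qed.

Lemma StronglySorted_exists (l : list T) (P : T -> Prop) : (forall i, P i -> In i l) ->
  exists l', StronglySorted lt l' /\ forall i, In i l' <-> P i.
Proof.
  revert P; induction l as [|a l IH]; intros P hP.
  - exists []. split; [constructor|]. intro i; split; [simpl; tauto|]. intro h; apply (hP i h).
  - destruct (IH (fun i => P i /\ i <> a)) as [l' [h1 h2]].
    { intros i [hi hne]. destruct (hP i hi); auto. congruence. }
    destruct (classic (P a)) as [pa|pa].
    + destruct (StronglySorted_insert h1 (a := a)) as [l'' [h3 h4]]; [intro hin; apply h2 in hin; tauto|].
      exists l''. split; auto. intro i. rewrite h4, h2. split.
      * intros [->|[]]; auto.
      * intro hi. destruct (classic (i = a)); auto.
    + exists l'. split; auto. intro i. rewrite h2. split; [tauto|].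
      intro hi; split; auto. intros ->; contradiction.
Qed.

End StronglySortedLemmas.

Lemma StronglySorted_rev T (lt : T -> T -> Prop) (l : list T) :
  StronglySorted lt l -> StronglySorted (fun x y => lt y x) (rev l).
Proof.
  induction 1 as [|a l _ IH hf]; simpl; [constructor|].
  apply (StronglySorted_app (lt := fun x y => lt y x)); auto; [repeat constructor|].
  intros x y hx [<-|[]]. apply in_rev in hx. rewrite Forall_forall in hf. auto.
Qed.

Section Truncation.
Variable G : nat -> group.
Notation L := (letter G).

Definition truncation (x : iword G) m (u : list L) : Prop :=
  exists l, restr x m l /\ map (wlet x) l = u.

Lemma positions_below (x : iword G) m : exists l, forall i, projT1 (wlet x i) < m -> In i l.
Proof.
  induction m as [|m [l hl]]; [exists []; intros; lia|].
  destruct (wfin x m) as [l' hl']. exists (l ++ l'). intros i hi.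
  apply in_or_app. destruct (Nat.eq_dec (projT1 (wlet x i)) m); [right|left]; auto.
  apply hl; lia.
Qed.

Lemma sorted_positions_exists (x : iword G) (Q : wL x -> Prop) m : exists l,
  StronglySorted (wlt x) l /\ forall j, In j l <-> Q j /\ projT1 (wlet x j) < m.
Proof.
  destruct (positions_below x m) as [l hl].
  apply (StronglySorted_exists (@wlt_trans _ x) (@wlt_total _ x) (l := l)).
  intros j [_ h]. apply hl, h.
Qed.

Lemma restr_exists (x : iword G) m : exists l, restr x m l.
Proof.
  destruct (sorted_positions_exists (x := x) (fun _ => True) m) as [l [hs hl]].
  exists l. split; [exact hs|]. intro i. rewrite hl. tauto.
Qed.

Lemma truncation_exists (x : iword G) m : exists u, truncation x m u.
Proof. destruct (restr_exists x m) as [l hl]. exists (map (wlet x) l), l; auto. Qed.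

Lemma truncation_unique x m (u v : list L) : truncation x m u -> truncation x m v -> u = v.
Proof.
  intros [l1 [[s1 h1] <-]] [l2 [[s2 h2] <-]]. f_equal.
  apply (StronglySorted_unique (@wlt_irr _ x) (@wlt_trans _ x)); auto.
  intro i. rewrite h1, h2. tauto.
Qed.

Lemma truncation_letter x m (u : list L) a : truncation x m u -> In a u ->
  exists i, a = wlet x i /\ projT1 (wlet x i) < m.
Proof.
  intros [l [[_ hl] <-]] ha. apply in_map_iff in ha as [i [<- hi]].
  exists i. split; [reflexivity|]. apply hl, hi.
Qed.

Lemma truncation_bounded x m (u : list L) : truncation x m u -> bounded m u.
Proof.
  intro h. apply Forall_forall. intros a ha.
  destruct (truncation_letter h ha) as [i [-> hi]]. exact hi.
Qed.

Lemma truncation_concat (a b : iword G) m ua ub :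
  truncation a m ua -> truncation b m ub -> truncation (concat a b) m (ua ++ ub).
Proof.
  intros [la [[s1 h1] <-]] [lb [[s2 h2] <-]].
  exists (map inl la ++ map inr lb). split; [split|].
  - apply StronglySorted_app;
      [exact (proj1 (@StronglySorted_map _ (wlt (concat a b)) _ inl la) s1)
      |exact (proj1 (@StronglySorted_map _ (wlt (concat a b)) _ inr lb) s2)|].
    intros x y hx hy. apply in_map_iff in hx as [? [<- _]], hy as [? [<- _]]. exact I.
  - intros [i|i]; simpl; rewrite in_app_iff, !in_map_iff; [rewrite <- h1|rewrite <- h2]; split.
    + intros [[j [e hj]]|[j [e hj]]]; [injection e as ->; exact hj|discriminate].
    + intro hi; left; exists i; auto.
    + intros [[j [e hj]]|[j [e hj]]]; [discriminate|injection e as ->; exact hj].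
    + intro hi; right; exists i; auto.
  - rewrite map_app, !map_map. reflexivity.
Qed.

Lemma truncation_inverse (a : iword G) m ua : truncation a m ua -> truncation (inverse a) m (inv ua).
Proof.
  intros [la [[s1 h1] <-]]. exists (rev la). split; [split|].
  - apply StronglySorted_rev, s1.
  - intro i. rewrite <- in_rev. apply h1.
  - unfold inv. rewrite map_rev, map_map. reflexivity.
Qed.

Lemma truncation_wpow (w : iword G) m u k : truncation w m u -> truncation (wpow w k) m (pow u k).
Proof. intro h. induction k; simpl; auto using truncation_concat. Qed.

Lemma truncation_project (x : iword G) m m' u u' : m <= m' ->
  truncation x m u -> truncation x m' u' -> u = project (fun n => n <? m) u'.
Proof.
  intros hm hu [l' [[s' h'] <-]]. apply (truncation_unique hu).
  exists (filter (fun i => projT1 (wlet x i) <? m) l'). split; [split|].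
  - apply StronglySorted_filter, s'.
  - intro i. rewrite filter_In, h', Nat.ltb_lt. lia.
  - unfold project. rewrite filter_map_swap. reflexivity.
Qed.

Lemma word_eq_truncation (a b : iword G) m u v :
  word_eq a b -> truncation a m u -> truncation b m v -> fp_eq m u v.
Proof. intros h [l1 [h1 <-]] [l2 [h2 <-]]. apply h; auto. Qed.

Lemma word_eq_of_truncation (a b : iword G) :
  (forall m u v, truncation a m u -> truncation b m v -> fp_eq m u v) -> word_eq a b.
Proof. intros h m l1 l2 h1 h2. apply (h m); [exists l1|exists l2]; auto. Qed.

End Truncation.

Section Subword.
Variable G : nat -> group.
Variables (w : iword G) (P : wL w -> Prop).

Definition sub_pos := {j : wL w | P j}.

Lemma sub_pos_eq (x y : sub_pos) : proj1_sig x = proj1_sig y -> x = y.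
Proof. destruct x as [a p], y as [b q]; simpl. intros <-. f_equal. apply proof_irrelevance. Qed.

Definition sub_lt (x y : sub_pos) := wlt w (proj1_sig x) (proj1_sig y).

Lemma sub_lt_irrefl i : ~ sub_lt i i.
Proof. apply wlt_irr. Qed.

Lemma sub_lt_trans i j k : sub_lt i j -> sub_lt j k -> sub_lt i k.
Proof. apply wlt_trans. Qed.

Lemma sub_lt_total i j : sub_lt i j \/ i = j \/ sub_lt j i.
Proof.
  destruct (@wlt_total _ w (proj1_sig i) (proj1_sig j)) as [h|[h|h]]; auto.
  right; left; apply sub_pos_eq, h.
Qed.

Lemma sub_pos_countable : exists f : sub_pos -> nat, forall i j, f i = f j -> i = j.
Proof.
  destruct (wcount w) as [f hf]. exists (fun x => f (proj1_sig x)).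
  intros i j e. apply sub_pos_eq, hf, e.
Qed.

Lemma sub_letter_nontrivial (i : sub_pos) :
  projT2 (wlet w (proj1_sig i)) <> gone (G (projT1 (wlet w (proj1_sig i)))).
Proof. apply wnontriv. Qed.

Lemma sub_pos_list (l : list (wL w)) : exists ls : list sub_pos,
  forall x : sub_pos, In (proj1_sig x) l -> In x ls.
Proof.
  induction l as [|a l [ls hls]]; [exists []; simpl; tauto|].
  destruct (classic (P a)) as [pa|pa].
  - exists (exist _ a pa :: ls). intros x [e|hx]; [left|right; auto]. apply sub_pos_eq, e.
  - exists ls. intros x [e|hx]; auto. destruct x as [b q]; simpl in e. subst; contradiction.
Qed.

Lemma sub_pos_finite n : exists l : list sub_pos,
  forall i, projT1 (wlet w (proj1_sig i)) = n -> In i l.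
Proof.
  destruct (wfin w n) as [l hl]. destruct (sub_pos_list l) as [ls hls].
  exists ls. intros i hi. apply hls, hl, hi.
Qed.

Definition subword : iword G :=
  @IWord G sub_pos sub_lt sub_lt_irrefl sub_lt_trans sub_lt_total sub_pos_countable
    (fun x => wlet w (proj1_sig x)) sub_letter_nontrivial sub_pos_finite.

Lemma sub_pos_lift (l : list (wL w)) : (forall i, In i l -> P i) ->
  exists ls : list sub_pos, map (@proj1_sig _ _) ls = l.
Proof.
  induction l as [|a l IH]; intro h; [exists []; reflexivity|].
  destruct IH as [ls hls]; [intros; apply h; right; auto|].
  exists (exist _ a (h a (or_introl eq_refl)) :: ls). simpl. f_equal; auto.
Qed.

Lemma truncation_subword m (l : list (wL w)) : StronglySorted (wlt w) l ->
  (forall i, In i l <-> P i /\ projT1 (wlet w i) < m) -> truncation subword m (map (wlet w) l).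
Proof.
  intros hs hi. destruct (@sub_pos_lift l) as [ls hls]; [intros i h; apply hi, h|].
  exists ls. split; [split|].
  - subst l. apply StronglySorted_map in hs. exact hs.
  - intro x. simpl. split.
    + intro hx. apply (in_map (@proj1_sig _ _)) in hx. rewrite hls in hx. apply hi, hx.
    + intro hx. assert (h2 : In (proj1_sig x) l) by (apply hi; split; auto; apply proj2_sig).
      rewrite <- hls in h2. apply in_map_iff in h2 as [y [e hy]].
      rewrite <- (sub_pos_eq e). exact hy.
  - simpl. rewrite <- hls, map_map. reflexivity.
Qed.

End Subword.

Section Splitting.
Variable G : nat -> group.
Variables (w : iword G) (i : wL w).

Definition before_pos := subword (fun j => wlt w j i).
Definition at_pos := subword (fun j => j = i).
Definition after_pos := subword (fun j => wlt w i j).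

Lemma truncation_split m : exists U A V, truncation before_pos m U /\ truncation at_pos m A /\
  truncation after_pos m V /\ truncation w m (U ++ A ++ V).
Proof.
  destruct (sorted_positions_exists (x := w) (fun j => wlt w j i) m) as [lu [su hu]].
  destruct (sorted_positions_exists (x := w) (fun j => j = i) m) as [la [sa ha]].
  destruct (sorted_positions_exists (x := w) (fun j => wlt w i j) m) as [lv [sv hv]].
  exists (map (wlet w) lu), (map (wlet w) la), (map (wlet w) lv).
  split; [apply truncation_subword; auto|]. split; [apply truncation_subword; auto|].
  split; [apply truncation_subword; auto|].
  exists (lu ++ la ++ lv). split; [split|rewrite !map_app; reflexivity].
  - apply StronglySorted_app; [auto|apply StronglySorted_app; auto|].
    + intros x y hx hy. apply ha in hx as [-> _]. apply hv in hy as [hy _]. exact hy.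
    + intros x y hx hy. apply hu in hx as [hx _]. apply in_app_iff in hy as [hy|hy].
      * apply ha in hy as [-> _]. exact hx.
      * apply hv in hy as [hy _]. eapply wlt_trans; eassumption.
  - intro j. rewrite !in_app_iff, hu, ha, hv. split; [intros [[_ h]|[[_ h]|[_ h]]]; auto|].
    intro h. destruct (@wlt_total _ w j i) as [h1|[h1|h1]]; tauto.
Qed.

Lemma at_pos_finite : is_finite_word at_pos.
Proof.
  exists [exist (fun j => j = i) i eq_refl]. intro x. left.
  apply sub_pos_eq. simpl. symmetry. apply (proj2_sig x).
Qed.

Lemma truncation_at_pos m A : truncation at_pos m A ->
  A = if projT1 (wlet w i) <? m then [wlet w i] else [].
Proof.
  intro hA. apply (truncation_unique hA). destruct (Nat.ltb_spec (projT1 (wlet w i)) m) as [h|h].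
  - apply (@truncation_subword G w (fun j => j = i) m [i]); [repeat constructor|].
    intro j. simpl. split; [intros [<-|[]]; auto|intros [-> _]; auto].
  - apply (@truncation_subword G w (fun j => j = i) m []); [constructor|].
    intro j. simpl. split; [tauto|intros [-> h']; lia].
Qed.

Lemma word_eq_conj_split :
  word_eq (concat (concat (concat before_pos at_pos) (inverse before_pos))
                  (concat before_pos after_pos)) w.
Proof.
  apply word_eq_of_truncation. intros m X Y hX hY.
  destruct (truncation_split m) as [U [A [V [hU [hA [hV hW]]]]]].
  pose proof (truncation_concat (truncation_concat (truncation_concat hU hA) (truncation_inverse hU))
                                (truncation_concat hU hV)) as hX'.
  rewrite (truncation_unique hX hX'), (truncation_unique hY hW).
  apply fp_eq_of_reduce; [exact (truncation_bounded hX')|exact (truncation_bounded hW)|].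
  rewrite <- !app_assoc, app_assoc, reduce_cancel, <- app_assoc. reflexivity.
Qed.

End Splitting.

(** * Tail triviality *)

Section TailTrivial.
Variable G : nat -> group.
Notation L := (letter G).

Definition tail_trivial N (x : iword G) : Prop :=
  forall m u, truncation x m u -> reduce (project (Nat.leb N) u) = [].

Lemma tail_trivial_mono N N' x : N <= N' -> tail_trivial N x -> tail_trivial N' x.
Proof.
  intros hN h m u hu. rewrite <- (Nat.max_r N N' hN), <- project_leb_leb.
  apply project_reduce_nil, (h m u hu).
Qed.

Lemma tail_trivial_finite x : is_finite_word x -> exists N, tail_trivial N x.
Proof.
  intros [l hl].
  assert (hb : exists N, forall i, In i l -> projT1 (wlet x i) < N).
  { clear hl. induction l as [|a l [N hN]]; [exists 0; simpl; tauto|].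
    exists (S (max N (projT1 (wlet x a)))). intros i [<-|hi]; [lia|]. specialize (hN i hi); lia. }
  destruct hb as [N hN]. exists N. intros m u hu. rewrite project_nil; [reflexivity|].
  intros a ha. destruct (truncation_letter hu ha) as [i [-> _]]. apply Nat.leb_gt, hN, hl.
Qed.

Lemma tail_trivial_concat N a b : tail_trivial N a -> tail_trivial N b ->
  tail_trivial N (concat a b).
Proof.
  intros ha hb m u hu.
  destruct (truncation_exists a m) as [ua hua], (truncation_exists b m) as [ub hub].
  rewrite (truncation_unique hu (truncation_concat hua hub)), project_app.
  rewrite reduce_nil_l; [exact (hb m ub hub)|exact (ha m ua hua)].
Qed.

Lemma tail_trivial_inverse N a : tail_trivial N a -> tail_trivial N (inverse a).
Proof.
  intros ha m u hu. destruct (truncation_exists a m) as [ua hua].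
  rewrite (truncation_unique hu (truncation_inverse hua)), project_inv.
  apply reduce_inv_nil, (ha m ua hua).
Qed.

Lemma tail_trivial_conj N a c : tail_trivial N a ->
  tail_trivial N (concat (concat c a) (inverse c)).
Proof.
  intros ha m u hu.
  destruct (truncation_exists a m) as [ua hua], (truncation_exists c m) as [uc huc].
  rewrite (truncation_unique hu (truncation_concat (truncation_concat huc hua) (truncation_inverse huc))).
  rewrite !project_app, project_inv, <- app_assoc. apply reduce_conj_nil, (ha m ua hua).
Qed.

Lemma tail_trivial_word_eq N a b : tail_trivial N a -> word_eq a b -> tail_trivial N b.
Proof.
  intros ha hab m v hv. destruct (truncation_exists a m) as [ua hua].
  rewrite <- (reduce_fp_eq (project_fp_eq _ (word_eq_truncation hab hua hv))). exact (ha m ua hua).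
Qed.

Lemma ncl_tail_trivial x : in_ncl x -> exists N, tail_trivial N x.
Proof.
  induction 1 as [w hw|a b _ [Na hA] _ [Nb hB]|a _ [Na hA]|a c _ [Na hA]|a b _ [Na hA] hab].
  - exact (tail_trivial_finite hw).
  - exists (max Na Nb).
    apply tail_trivial_concat; [apply (tail_trivial_mono (N := Na))|apply (tail_trivial_mono (N := Nb))];
      auto; lia.
  - exists Na. exact (tail_trivial_inverse hA).
  - exists Na. exact (tail_trivial_conj (c := c) hA).
  - exists Na. exact (tail_trivial_word_eq hA hab).
Qed.

Lemma ncl_of_tail_trivial_nil N w : truncation w N [] -> tail_trivial N w -> in_ncl w.
Proof.
  intros h0 hT.
  assert (hge : forall i, N <= projT1 (wlet w i)).
  { intro i. destruct (Nat.le_gt_cases N (projT1 (wlet w i))) as [h|h]; [exact h|exfalso].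
    destruct h0 as [l [[_ hl] e]]. apply hl in h. destruct l; [contradiction|discriminate]. }
  set (empty := @subword G w (fun _ => False)).
  assert (hempty : forall m, truncation empty m []).
  { intro m. apply (@truncation_subword G w (fun _ => False) m []); [constructor|simpl; tauto]. }
  apply (@ncl_eq _ empty).
  { apply ncl_fin. exists []. intros [x []]. }
  apply word_eq_of_truncation. intros m u v hu hv.
  rewrite (truncation_unique hu (hempty m)).
  apply fp_eq_of_reduce; [constructor|exact (truncation_bounded hv)|].
  rewrite <- (project_id (p := Nat.leb N) (u := v)); [symmetry; exact (hT m v hv)|].
  intros a ha. destruct (truncation_letter hv ha) as [i [-> _]]. apply Nat.leb_le, hge.
Qed.

Lemma tail_trivial_remove_pos N w i : projT1 (wlet w i) < N -> tail_trivial N w ->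
  tail_trivial N (concat (before_pos i) (after_pos i)).
Proof.
  intros hi hT m X hX. destruct (truncation_split i m) as [U [A [V [hU [hA [hV hW]]]]]].
  rewrite (truncation_unique hX (truncation_concat hU hV)).
  pose proof (hT m _ hW) as h. rewrite (truncation_at_pos hA) in h.
  rewrite project_app. destruct (projT1 (wlet w i) <? m); rewrite !project_app in h; [|exact h].
  rewrite project_cons in h. replace (N <=? projT1 (wlet w i)) with false in h
    by (symmetry; apply Nat.leb_gt, hi). exact h.
Qed.

(* Induction on the number of letters of [w] from [G_0, ..., G_{N-1}]: each of them is
   split off as a conjugate of a one-letter word. *)
Lemma ncl_of_tail_trivial N n : forall w u, truncation w N u -> length u = n ->
  tail_trivial N w -> in_ncl w.
Proof.
  induction n as [|n IH]; intros w u hu hn hT.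
  { destruct u; [exact (ncl_of_tail_trivial_nil hu hT)|discriminate]. }
  destruct u as [|a u0]; [discriminate|].
  destruct (truncation_letter hu (or_introl eq_refl)) as [i [-> hi]].
  destruct (truncation_split i N) as [U [A [V [hU [hA [hV hW]]]]]].
  rewrite (truncation_at_pos hA), (proj2 (Nat.ltb_lt _ _) hi) in hW.
  apply (ncl_eq (a := concat (concat (concat (before_pos i) (at_pos i)) (inverse (before_pos i)))
                             (concat (before_pos i) (after_pos i)))); [|apply word_eq_conj_split].
  apply ncl_mul; [apply ncl_conj, ncl_fin, at_pos_finite|].
  apply (IH _ (U ++ V)); [exact (truncation_concat hU hV)| |exact (tail_trivial_remove_pos hi hT)].
  rewrite (truncation_unique hu hW), !length_app in hn. simpl in hn. rewrite length_app. lia.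
Qed.

End TailTrivial.

Theorem proposition8 (G : nat -> group) (w : iword G) (k : nat) :
  in_ncl (wpow w k) -> in_ncl w.
Proof.
  intro h. destruct (ncl_tail_trivial h) as [N hN].
  set (X := fun m v => exists u, truncation w m u /\ v = project (Nat.leb N) u).
  destruct (torsion_family_tail_trivial (k := k) (X := X)) as [N' hN'].
  - intro m. destruct (truncation_exists w m) as [u hu]. exists (project (Nat.leb N) u), u. auto.
  - intros m v [u [hu ->]]. rewrite <- project_pow. exact (hN m _ (truncation_wpow k hu)).
  - intros m m' v v' hm [u [hu ->]] [u' [hu' ->]].
    rewrite (truncation_project hm hu hu'). apply project_comm.
  - assert (hT : tail_trivial (max N N') w).
    { intros m u hu. rewrite <- project_leb_leb. apply (hN' m). exists u. auto. }
    destruct (truncation_exists w (max N N')) as [u hu].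
    exact (ncl_of_tail_trivial hu eq_refl hT).
Qed.
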